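(* Assume (A1) and (A2), and set $\tilde\eta=2\eta\|\mathbf{u}\|_2^2/m$. Let $k\ge1$ with $\bar T_k<\infty$, and suppose $E_{\bar T_k-1}:=\frac1m\sum_{r\in[m]}\big[\sigma(-\langle\mathbf{w}^{(\bar T_k-1)}_{-y,r},-y\mathbf{u}\rangle)+\sigma(-\langle\mathbf{w}^{(\bar T_k-1)}_{-y,r},-y\mathbf{v}\rangle)\big]<\delta/2$. Then $$yf(\mathbf{x};\mathbf{W}^{(\bar T_k-1)})\ge\frac{2+\tilde\eta-\sqrt{\tilde\eta^2+4\tilde\eta}}{2\tilde\eta},$$ and $$yf(\mathbf{x};\mathbf{W}^{(\bar T_k)})\le yf(\mathbf{x};\mathbf{W}^{(\bar T_k-1)})\Big(1+\tilde\eta\big(1-yf(\mathbf{x};\mathbf{W}^{(\bar T_k-1)})\big)\Big)^2+2E_{\bar T_k-1}.$$ (This holds regardless of whether $\bar T_k$ is before or after $T_{(\mathbf{v})}$.)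
   Context: Single-data setting: $\mathbf{u},\mathbf{v}\in\mathbb{R}^d$ are fixed nonzero vectors with $\langle\mathbf{u},\mathbf{v}\rangle=0$, $y\in\{\pm1\}$, and the single training example is $(\mathbf{x},y)$ with $\mathbf{x}=(y\mathbf{u},y\mathbf{v})$. Let $\sigma(z)=(\max\{z,0\})^2$ (so $\sigma'(z)=2\max\{z,0\}$). Weights $\mathbf{W}=\{\mathbf{w}_{j,r}\}_{j\in\{\pm1\},r\in[m]}\subset\mathbb{R}^d$; network $f(\mathbf{x};\mathbf{W})=\sum_{j\in\{\pm1\}}jF_j(\mathbf{x};\mathbf{W})$ with $F_j(\mathbf{x};\mathbf{W})=\frac1m\sum_{r\in[m]}[\sigma(\langle\mathbf{w}_{j,r},y\mathbf{u}\rangle)+\sigma(\langle\mathbf{w}_{j,r},y\mathbf{v}\rangle)]$; loss $L(\mathbf{W})=\frac12(f(\mathbf{x};\mathbf{W})-y)^2$. All entries of all $\mathbf{w}^{(0)}_{j,r}$ are i.i.d. $N(0,\sigma_0^2)$, and for $t\ge0$: $\mathbf{w}^{(t+1)}_{j,r}=\mathbf{w}^{(t)}_{j,r}-\frac{\eta j}{m}(f(\mathbf{x};\mathbf{W}^{(t)})-y)\big(\sigma'(\langle\mathbf{w}^{(t)}_{j,r},y\mathbf{u}\rangle)y\mathbf{u}+\sigma'(\langle\mathbf{w}^{(t)}_{j,r},y\mathbf{v}\rangle)y\mathbf{v}\big)$ with learning rate $\eta>0$. (A1) Conditions: $m/(4\|\mathbf{u}\|_2^2)\le\eta\le2m/(5\|\mathbf{u}\|_2^2)$;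 $\sigma_0=\tilde\Theta(\max\{\|\mathbf{u}\|_2,\|\mathbf{v}\|_2\}^{-1}d^{-1/2})$; $\|\mathbf{v}\|_2<0.01\|\mathbf{u}\|_2$; $d=\Omega(\mathrm{polylog}(m))$. (A2) Oscillation: there is a constant $\delta\in(0.2,0.8)$ with $|yf(\mathbf{x};\mathbf{W}^{(t)})-1|\ge\delta$ for every $t\ge0$. Up-crossing times: $\bar T_0=0$ and, recursively, $\bar T_k=\min\{t>\bar T_{k-1}:yf(\mathbf{x};\mathbf{W}^{(t)})\ge1\text{ and }yf(\mathbf{x};\mathbf{W}^{(t-1)})<1\}$. $T_{(\mathbf{v})}=\min\{t\ge0:\frac1m\sum_{r}\sigma(\langle\mathbf{w}^{(t)}_{y,r},y\mathbf{v}\rangle)>\delta\}$. *)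

From HB Require Import structures.
From mathcomp Require Import all_boot all_order all_algebra.
From mathcomp Require Import boolp reals.
Set Implicit Arguments. Unset Strict Implicit. Unset Printing Implicit Defensive.
Import Order.TTheory GRing.Theory Num.Theory.
Local Open Scope ring_scope.

Section Defs.
Variables (R : realType) (d m : nat).

Definition dot (a b : 'rV[R]_d) : R := \sum_(i < d) a 0 i * b 0 i.
Definition norm2 (a : 'rV[R]_d) : R := Num.sqrt (dot a a).

(* Signs j, y in {+1,-1} are encoded by booleans: true = +1, false = -1;
   -y is ~~ y. *)
Definition sgn (b : bool) : R := if b then 1 else -1.

Definition sigma (z : R) : R := (Num.max z 0) ^+ 2.
Definition dsigma (z : R) : R := 2 * Num.max z 0.

Definition weights := bool -> 'I_m -> 'rV[R]_d.

Definition netF (x : 'rV[R]_d * 'rV[R]_d) (W : weights) (j : bool) : R :=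
  (m%:R)^-1 * \sum_(r < m) (sigma (dot (W j r) x.1) + sigma (dot (W j r) x.2)).

Definition netf (x : 'rV[R]_d * 'rV[R]_d) (W : weights) : R :=
  \sum_(j : bool) sgn j * netF x W j.

Definition input (u v : 'rV[R]_d) (y : bool) : 'rV[R]_d * 'rV[R]_d :=
  (sgn y *: u, sgn y *: v).

(* one gradient-descent step on L(W) = 1/2 (f(x;W) - y)^2, as in the paper *)
Definition gd_step (eta : R) (u v : 'rV[R]_d) (y : bool) (W : weights) : weights :=
  fun j r =>
    W j r - (eta * sgn j / m%:R * (netf (input u v y) W - sgn y)) *:
      (dsigma (dot (W j r) (sgn y *: u)) *: (sgn y *: u)
       + dsigma (dot (W j r) (sgn y *: v)) *: (sgn y *: v)).

Definition traj (eta : R) (u v : 'rV[R]_d) (y : bool) (W0 : weights) (t : nat) : weights :=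
  iter t (gd_step eta u v y) W0.

(* Up-crossing times of a real sequence g (g t = y f(x;W^{(t)})):
   Tbar g 0 = Some 0 and Tbar g k.+1 = Some (min {t > Tbar g k : g t >= 1 /\ g (t-1) < 1}),
   or None (i.e. +infinity) if that set is empty or Tbar g k is infinite. *)
Definition upP (g : nat -> R) (s : nat) : pred nat :=
  fun t => [&& (s < t)%N, 1 <= g t & g t.-1 < 1].

Definition next_up (g : nat -> R) (s : nat) : option nat :=
  match pselect (exists t, upP g s t) with
  | left H => Some (ex_minn H)
  | right _ => None
  end.

Fixpoint Tbar (g : nat -> R) (k : nat) : option nat :=
  match k with
  | 0 => Some 0%N
  | k'.+1 => obind (next_up g) (Tbar g k')
  end.

End Defs.

From HB Require Import structures.
From mathcomp Require Import all_boot all_order all_algebra.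
From mathcomp Require Import boolp reals ring lra.
Import Order.TTheory GRing.Theory Num.Theory.
Local Open Scope ring_scope.
Set Implicit Arguments. Unset Strict Implicit. Unset Printing Implicit Defensive.

(* Put s = 1 - yf(W^(T-1)) and x = eta~ s. Because <u, v> = 0 and sigma is
   2-homogeneous on the positive half-line, one gradient step multiplies every
   activation of a neuron of class y by (1 + c)^2 and every activation of a
   neuron of class -y by (1 - c)^2, with 0 <= c <= x (c = x on the u-patch).
   Hence yf(W^T) <= (1 + x)^2 (yf(W^(T-1)) + E) - (1 - x)^2 E
   = yf(W^(T-1)) (1 + x)^2 + 4 x E.  Since yf(W^T) >= 1 + delta while
   E < delta/2 <= s/2, this forces x <= 1/2, which gives the second bound and
   yf(W^(T-1)) (1 + x)^2 >= 1, a cubic inequality in yf(W^(T-1)) whose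
   smaller root is the first bound. *)

Section Activation.
Variable R : realType.
Implicit Types c C z : R.

Lemma sigma_ge0 z : 0 <= sigma z.
Proof. exact: sqr_ge0. Qed.

Lemma sigma_shift c z : -1 <= c -> sigma (z + c * Num.max z 0) = (1 + c) ^+ 2 * sigma z.
Proof.
move=> c_ge; rewrite /sigma; have [z_le0|z_gt0] := lerP z 0.
  by rewrite mulr0 addr0 (max_r z_le0) expr0n mulr0.
rewrite -{1}[z]mul1r -mulrDl max_l ?exprMn //.
by apply: mulr_ge0; [lra | exact: ltW].
Qed.

Lemma sigma_grow c C z : 0 <= c -> c <= C ->
  sigma (z + c * Num.max z 0) <= (1 + C) ^+ 2 * sigma z.
Proof.
move=> c_ge0 c_le; rewrite sigma_shift; last lra.
by rewrite ler_wpM2r ?sigma_ge0 // !expr2 ler_pM //; lra.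
Qed.

Lemma sigma_shrink c C z : 0 <= c -> c <= C -> C <= 1 ->
  (1 - C) ^+ 2 * sigma z <= sigma (z + - c * Num.max z 0).
Proof.
move=> c_ge0 c_le C_le; rewrite sigma_shift; last lra.
by rewrite ler_wpM2r ?sigma_ge0 // !expr2 ler_pM //; lra.
Qed.

End Activation.

Section Network.
Variables (R : realType) (d m : nat).
Implicit Types (a b c : 'rV[R]_d) (W : weights R d m).

Lemma dotC a b : dot a b = dot b a.
Proof. by apply: eq_bigr => i _; rewrite mulrC. Qed.

Lemma dotDl a b c : dot (a + b) c = dot a c + dot b c.
Proof. by rewrite /dot -big_split; apply: eq_bigr => i _; rewrite !mxE mulrDl. Qed.

Lemma dotBl a b c : dot (a - b) c = dot a c - dot b c.
Proof. by rewrite /dot -sumrB; apply: eq_bigr => i _; rewrite !mxE mulrBl. Qed.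

Lemma dotZl k a b : dot (k *: a) b = k * dot a b.
Proof. by rewrite /dot mulr_sumr; apply: eq_bigr => i _; rewrite !mxE mulrA. Qed.

Lemma dotZr k a b : dot a (k *: b) = k * dot a b.
Proof. by rewrite dotC dotZl dotC. Qed.

Lemma dotxx_ge0 a : 0 <= dot a a.
Proof. by apply: sumr_ge0 => i _; rewrite -expr2 sqr_ge0. Qed.

Lemma norm2_sqr a : norm2 a ^+ 2 = dot a a.
Proof. by rewrite sqr_sqrtr // dotxx_ge0. Qed.

Lemma sgn_sqr (y : bool) : sgn R y * sgn R y = 1.
Proof. by case: y; rewrite /sgn ?mulr1 ?mulrNN ?mulr1. Qed.

Lemma sgnN (y : bool) : sgn R (~~ y) = - sgn R y.
Proof. by case: y; rewrite /sgn ?opprK. Qed.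

Lemma netF_ge0 x W j : 0 <= netF x W j.
Proof.
rewrite /netF mulr_ge0 ?invr_ge0 ?ler0n //.
by apply: sumr_ge0 => r _; rewrite addr_ge0 ?sigma_ge0.
Qed.

Lemma netF_le x W W' j j' K :
  (forall r, sigma (dot (W' j' r) x.1) <= K * sigma (dot (W j r) x.1)) ->
  (forall r, sigma (dot (W' j' r) x.2) <= K * sigma (dot (W j r) x.2)) ->
  netF x W' j' <= K * netF x W j.
Proof.
move=> le1 le2; rewrite /netF mulrCA ler_wpM2l ?invr_ge0 ?ler0n // mulr_sumr.
by apply: ler_sum => r _; rewrite mulrDr lerD.
Qed.

Lemma netF_ge x W W' j j' K :
  (forall r, K * sigma (dot (W j r) x.1) <= sigma (dot (W' j' r) x.1)) ->
  (forall r, K * sigma (dot (W j r) x.2) <= sigma (dot (W' j' r) x.2)) ->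
  K * netF x W j <= netF x W' j'.
Proof.
move=> le1 le2; rewrite /netF mulrCA ler_wpM2l ?invr_ge0 ?ler0n // mulr_sumr.
by apply: ler_sum => r _; rewrite mulrDr lerD.
Qed.

Lemma sgn_mul_netf x W (y : bool) :
  sgn R y * netf x W = netF x W y - netF x W (~~ y).
Proof. by rewrite /netf big_bool; case: y; rewrite /sgn /=; ring. Qed.

Lemma netf_inputC u v y W : netf (input u v y) W = netf (input v u y) W.
Proof.
by apply: eq_bigr => j _; congr (_ * (_ * _)); apply: eq_bigr => r _; rewrite addrC.
Qed.

Lemma gd_stepC eta u v y W j r : gd_step eta u v y W j r = gd_step eta v u y W j r.
Proof. by rewrite /gd_step netf_inputC [X in _ *: X]addrC. Qed.

Lemma dot_gd_step eta u v y W j r : dot u v = 0 ->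
  let z := dot (W j r) (sgn R y *: u) in
  dot (gd_step eta u v y W j r) (sgn R y *: u) =
  z + sgn R j * sgn R y *
        (2 * eta * dot u u / m%:R * (1 - sgn R y * netf (input u v y) W)) *
        Num.max z 0.
Proof.
move=> uv0 /=; rewrite /gd_step dotBl dotZl dotDl !dotZl !dotZr (dotC v u) uv0 /dsigma.
move: (sgn R j) (netf _ _) (dot (W j r) u) (dot (W j r) v) => sj N wu wv.
by case: y; rewrite /sgn /=; ring.
Qed.

End Network.

Section GradientStep.
Variables (R : realType) (d m : nat) (eta : R) (u v : 'rV[R]_d) (y : bool).
Variable W : weights R d m.
Hypothesis uv0 : dot u v = 0.

Local Notation X := (input u v y).
Local Notation gap := (1 - sgn R y * netf X W).
Local Notation rate a := (2 * eta * dot a a / m%:R * gap).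

Let rate_ge0 (a : 'rV[R]_d) : 0 <= eta -> 0 <= gap -> 0 <= rate a.
Proof. by move=> eta_ge0 gap_ge0; rewrite !mulr_ge0 ?invr_ge0 ?ler0n ?dotxx_ge0. Qed.

Let rate_le : 0 <= eta -> 0 <= gap -> dot v v <= dot u u -> rate v <= rate u.
Proof.
move=> eta_ge0 gap_ge0 vv_le.
by rewrite ler_wpM2r // ler_wpM2r ?invr_ge0 ?ler0n // ler_wpM2l // mulr_ge0.
Qed.

Lemma netF_gd_step_same : 0 <= eta -> 0 <= gap -> dot v v <= dot u u ->
  netF X (gd_step eta u v y W) y <= (1 + rate u) ^+ 2 * netF X W y.
Proof.
move=> eta_ge0 gap_ge0 vv_le; apply: netF_le => r /=.
  rewrite dot_gd_step // sgn_sqr mul1r.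
  exact: sigma_grow (rate_ge0 u eta_ge0 gap_ge0) (lexx (rate u)).
rewrite gd_stepC dot_gd_step; last by rewrite dotC.
rewrite sgn_sqr mul1r -(netf_inputC u).
exact: sigma_grow (rate_ge0 v eta_ge0 gap_ge0) (rate_le eta_ge0 gap_ge0 vv_le).
Qed.

Lemma netF_gd_step_other : 0 <= eta -> 0 <= gap -> dot v v <= dot u u -> rate u <= 1 ->
  (1 - rate u) ^+ 2 * netF X W (~~ y) <= netF X (gd_step eta u v y W) (~~ y).
Proof.
move=> eta_ge0 gap_ge0 vv_le rate_le1; apply: netF_ge => r /=.
  rewrite dot_gd_step // sgnN mulNr sgn_sqr mulN1r.
  exact: sigma_shrink (rate_ge0 u eta_ge0 gap_ge0) (lexx (rate u)) rate_le1.
rewrite gd_stepC dot_gd_step; last by rewrite dotC.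
rewrite sgnN mulNr sgn_sqr mulN1r -(netf_inputC u).
exact: sigma_shrink (rate_ge0 v eta_ge0 gap_ge0) (rate_le eta_ge0 gap_ge0 vv_le) rate_le1.
Qed.

End GradientStep.

Lemma smaller_root_le_of_growth (R : rcfType) (et g : R) :
  0 < et -> g < 1 -> 1 <= g * (1 + et * (1 - g)) ^+ 2 ->
  (2 + et - Num.sqrt (et ^+ 2 + 4 * et)) / (2 * et) <= g.
Proof.
move=> et0 g1 grow.
set a := 2 - et + 2 * et * (1 - g).
have disc : a ^+ 2 <= et ^+ 2 + 4 * et.
  have quad : (1 - g) * (a ^+ 2 - (et ^+ 2 + 4 * et)) =
               4 * (1 - g * (1 + et * (1 - g)) ^+ 2).
    by rewrite /a; ring.
  rewrite -subr_le0 -(pmulr_rle0 _ (_ : 0 < 1 - g)) ?quad; lra.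
rewrite ler_pdivrMr ?mulr_gt0 //.
suff : a <= Num.sqrt (et ^+ 2 + 4 * et) by rewrite /a; lra.
have [a0|a0] := lerP a 0; first by apply: le_trans a0 (sqrtr_ge0 _).
by rewrite -(ger0_norm (ltW a0)) -sqrtr_sqr ler_sqrt // (le_trans (sqr_ge0 a)).
Qed.

Lemma growth_rate_le1 (R : realFieldType) (et g0 E x : R) :
  et <= 4 / 5 -> g0 <= 1 -> E < 2 / 5 -> x = et * (1 - g0) ->
  1 < (1 + x) ^+ 2 * (g0 + E) -> x <= 1.
Proof.
move=> et_le g0_le E_lt def_x grow; rewrite leNgt; apply/negP => x_gt1.
have F_le : g0 + E <= 7 / 5 - 5 / 4 * x.
  by have := mulr_ge0 (_ : 0 <= 4 / 5 - et) (_ : 0 <= 1 - g0); rewrite def_x mulrBl; lra.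
have := ler_wpM2l (sqr_ge0 (1 + x)) F_le.
rewrite !expr2 in grow *; nra.
Qed.

Lemma growth_rate_le_half (R : realFieldType) (de g0 x : R) :
  0 <= x -> 5 * x <= 4 * (1 - g0) -> de <= 1 - g0 ->
  1 + de * (1 - 2 * x) <= g0 * (1 + x) ^+ 2 -> x <= 1 / 2.
Proof.
move=> x_ge0 x_le de_le grow; rewrite leNgt; apply/negP => x_gt.
have := mulr_ge0 (_ : 0 <= 2 * x - 1) (_ : 0 <= 1 - g0 - de).
have := mulr_ge0 (_ : 0 <= 4 * (1 - g0) - 5 * x) (_ : 0 <= 2 + x * x).
rewrite !expr2 in grow; nra.
Qed.

Lemma up_crossing_bounds (R : rcfType) (et de E g0 g1 Fm x : R) :
  1 / 2 <= et -> et <= 4 / 5 -> 0 < de -> de < 4 / 5 -> de <= 1 - g0 ->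
  0 <= E -> E < de / 2 -> 1 + de <= g1 -> x = et * (1 - g0) ->
  0 <= Fm -> (x <= 1 -> (1 - x) ^+ 2 * E <= Fm) ->
  g1 <= (1 + x) ^+ 2 * (g0 + E) - Fm ->
  (2 + et - Num.sqrt (et ^+ 2 + 4 * et)) / (2 * et) <= g0 /\
  g1 <= g0 * (1 + x) ^+ 2 + 2 * E.
Proof.
move=> et_ge et_le de_gt0 de_lt de_le E_ge0 E_lt g1_ge def_x Fm_ge0 Fm_ge g1_le.
have x_ge0 : 0 <= x by rewrite def_x mulr_ge0 //; lra.
have x_le : 5 * x <= 4 * (1 - g0).
  by have := mulr_ge0 (_ : 0 <= 4 / 5 - et) (_ : 0 <= 1 - g0); rewrite def_x mulrBl; lra.
have x_le1 : x <= 1 by apply: (growth_rate_le1 (E := E) et_le _ _ def_x); lra.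
have shift : g1 <= g0 * (1 + x) ^+ 2 + 4 * x * E.
  have -> : g0 * (1 + x) ^+ 2 + 4 * x * E = (1 + x) ^+ 2 * (g0 + E) - (1 - x) ^+ 2 * E.
    by ring.
  by have := Fm_ge x_le1; lra.
have grow : 1 + de * (1 - 2 * x) <= g0 * (1 + x) ^+ 2.
  by have := mulr_ge0 x_ge0 (_ : 0 <= de / 2 - E); lra.
have x_le_half := growth_rate_le_half x_ge0 x_le de_le grow.
split; last by have := mulr_ge0 (_ : 0 <= 1 / 2 - x) E_ge0; lra.
apply: smaller_root_le_of_growth; [lra | lra |].
by have := mulr_ge0 (_ : 0 <= de) (_ : 0 <= 1 - 2 * x); rewrite -def_x; lra.
Qed.

Lemma Tbar_up_crossing (R : realType) (g : nat -> R) k T :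
  (0 < k)%N -> Tbar g k = Some T -> [/\ (0 < T)%N, 1 <= g T & g T.-1 < 1].
Proof.
case: k => // k _ /=; case: (Tbar g k) => //= s.
rewrite /next_up; case: pselect => // up_ex [<-].
case: ex_minnP => t /and3P [s_lt_t g_ge1 g_lt1] _.
by split; first exact: leq_ltn_trans s_lt_t.
Qed.

Lemma scaled_rate_bounds (R : realFieldType) (m eta N : R) :
  0 < m -> 0 < eta -> 0 <= N ->
  m / (4 * N) <= eta -> eta <= 2 * m / (5 * N) ->
  1 / 2 <= 2 * eta * N / m /\ 2 * eta * N / m <= 4 / 5.
Proof.
move=> m_gt0 eta_gt0 N_ge0 eta_ge eta_le.
have N_gt0 : 0 < N.
  rewrite lt_neqAle N_ge0 andbT; apply/eqP => N0.
  by move: eta_le; rewrite -N0 mulr0 invr0 mulr0; lra.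
move: eta_ge eta_le; rewrite ler_pdivrMr ?mulr_gt0 // ler_pdivlMr ?mulr_gt0 //.
have e_m : 2 * eta * N / m * m = 2 * eta * N by rewrite divfK ?gt_eqF.
by set e := 2 * eta * N / m in e_m *; split; nra.
Qed.

Theorem mainTheorem11 (R : realType) (d m : nat) (u v : 'rV[R]_d) (y : bool)
    (eta delta : R) (W0 : weights R d m) (k T : nat) :
    (0 < m)%N ->
    u != 0 -> v != 0 -> dot u v = 0 ->
    0 < eta ->
    m%:R / (4 * norm2 u ^+ 2) <= eta -> eta <= 2 * m%:R / (5 * norm2 u ^+ 2) ->
    norm2 v < 1 / 100 * norm2 u ->
    1 / 5 < delta -> delta < 4 / 5 ->
    (forall t : nat,
        delta <= `|sgn R y * netf (input u v y) (traj eta u v y W0 t) - 1|) ->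
    (1 <= k)%N ->
    Tbar (fun t => sgn R y * netf (input u v y) (traj eta u v y W0 t)) k = Some T ->
    let etat := 2 * eta * norm2 u ^+ 2 / m%:R in
    let W := traj eta u v y W0 in
    let g := fun t => sgn R y * netf (input u v y) (W t) in
    let E := (m%:R)^-1 * \sum_(r < m)
               (sigma (- dot (W T.-1 (~~ y) r) (- sgn R y *: u))
                + sigma (- dot (W T.-1 (~~ y) r) (- sgn R y *: v))) in
    E < delta / 2 ->
    (2 + etat - Num.sqrt (etat ^+ 2 + 4 * etat)) / (2 * etat) <= g T.-1 /\
    g T <= g T.-1 * (1 + etat * (1 - g T.-1)) ^+ 2 + 2 * E.
Proof.
move=> m_gt0 _ _ uv0 eta_gt0 A1_ge A1_le v_small de_gt de_lt A2 k_ge1 Tk.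
move=> etat W g E E_lt.
have [T_gt0 gT_ge1 gT1_lt1] : [/\ (0 < T)%N, 1 <= g T & g T.-1 < 1].
  exact: Tbar_up_crossing k_ge1 Tk.
have WT : W T = gd_step eta u v y (W T.-1) by rewrite /W -[in LHS](prednK T_gt0).
have [et_ge et_le] : 1 / 2 <= etat /\ etat <= 4 / 5.
  by apply: scaled_rate_bounds; rewrite ?ltr0n ?sqr_ge0.
have vv_le : dot v v <= dot u u.
  rewrite -!norm2_sqr !expr2; have := sqrtr_ge0 (dot v v); rewrite -/(norm2 v); nra.
have gap_gt0 : 0 < 1 - g T.-1 by lra.
have E_def : E = netF (input u v y) (W T.-1) (~~ y).
  by congr (_ * _); apply: eq_bigr => r _; rewrite !dotZr !mulNr !opprK.
have g_split t : g t = netF (input u v y) (W t) y - netF (input u v y) (W t) (~~ y).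
  exact: sgn_mul_netf.
have rate_eq : etat * (1 - g T.-1) =
    2 * eta * dot u u / m%:R * (1 - sgn R y * netf (input u v y) (W T.-1)).
  by rewrite /etat norm2_sqr.
have step_same :=
  netF_gd_step_same (y := y) (W := W T.-1) uv0 (ltW eta_gt0) (ltW gap_gt0) vv_le.
have step_other :=
  netF_gd_step_other (y := y) (W := W T.-1) uv0 (ltW eta_gt0) (ltW gap_gt0) vv_le.
rewrite -rate_eq -WT in step_same step_other.
have := A2 T.-1; have := A2 T; rewrite -/W -/(g T.-1) -/(g T) => A2T A2T1.
rewrite E_def in E_lt *.
apply: (up_crossing_bounds et_ge et_le _ de_lt _ (netF_ge0 _ _ _) E_lt _ erefl
  (netF_ge0 _ _ _) step_other).
- lra.
- by rewrite ltr0_norm in A2T1; lra.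
- by rewrite ger0_norm in A2T; lra.
- by rewrite [g T]g_split [in g T.-1 + _](g_split T.-1) subrK; lra.
Qed.
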